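(* Let $\mathbb{F}$ be a field with $\mathrm{char}(\mathbb{F})\neq2$ and let $X$ be a unitary alternative $\mathbb{F}$-algebra with unit $e$. Then the map $\mathrm{Inn}\colon X\to\mathcal{E}(X)$, $x\mapsto(x\cdot-,\,-\cdot x)$, is a bijection (indeed a linear isomorphism compatible with the multiplications). Concretely, every pair $(f*-,-*f)\in\mathcal{E}(X)$ satisfies $f*e=e*f=:\alpha\in X$ and $f*x=\alpha x$, $x*f=x\alpha$ for all $x\in X$, and $\mathrm{Inn}$ has trivial kernel.
   Context: An alternative algebra satisfies $(yx)x=y(xx)$ and $x(xy)=(xx)y$. For an alternative algebra $X$, $\mathcal{E}(X)$ (the external weak actor) is the subspace of all pairs $(f*-,\,-*f)\in\mathrm{End}(X)\times\mathrm{End}(X)$ such that for all $x,y\in X$: $f*(xy)=(x*f)y+(f*x)y-x(f*y)$, $(xy)*f=x(f*y)+x(y*f)-(x*f)y$, $x(y*f)=(yx)*f+(xy)*f-y(x*f)$, $(f*x)y=f*(yx)+f*(xy)-(f*y)x$. It carries the bilinear partial multiplication $\langle(f*-,-*f),(g*-,-*g)\rangle=(h*-,-*h)$ with $h*x=-(f*x)*g+f*(g*x)+f*(x*g)$ and $x*h=(x*f)*g+(f*x)*g-f*(x*g)$, defined whenever the result lies in $\mathcal{E}(X)$. *)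

(* A (possibly non-associative) F-algebra is an lmodType F
   together with a bilinear multiplication mul. *)
From HB Require Import structures.
From mathcomp Require Import all_boot all_order all_algebra.
Set Implicit Arguments. Unset Strict Implicit. Unset Printing Implicit Defensive.
Import GRing.Theory.
Local Open Scope ring_scope.

Section AltDefs.
Variables (F : fieldType) (X : lmodType F).

Definition is_lin (f : X -> X) : Prop :=
  forall (a : F) (u v : X), f (a *: u + v) = a *: f u + f v.

Definition bilinear_mul (mul : X -> X -> X) : Prop :=
  (forall y, is_lin (fun x => mul x y)) /\ (forall x, is_lin (mul x)).

Definition alternative (mul : X -> X -> X) : Prop :=
  forall x y, mul (mul y x) x = mul y (mul x x) /\
              mul x (mul x y) = mul (mul x x) y.

Definition is_unit_elt (mul : X -> X -> X) (e : X) : Prop :=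
  forall x, mul e x = x /\ mul x e = x.

(* (L, R) = (f*-, -*f) belongs to the external weak actor E(X) *)
Definition in_E (mul : X -> X -> X) (L R : X -> X) : Prop :=
  is_lin L /\ is_lin R /\
  forall x y,
    [/\ L (mul x y) = mul (R x) y + mul (L x) y - mul x (L y),
        R (mul x y) = mul x (L y) + mul x (R y) - mul (R x) y,
        mul x (R y) = R (mul y x) + R (mul x y) - mul y (R x)
      & mul (L x) y = L (mul y x) + L (mul x y) - mul (L y) x].

Definition Inn (mul : X -> X -> X) (x : X) : (X -> X) * (X -> X) :=
  (mul x, fun y => mul y x).

Definition Emul (LR1 LR2 : (X -> X) * (X -> X)) : (X -> X) * (X -> X) :=
  let: (L1, R1) := LR1 in let: (L2, R2) := LR2 in
  (fun x => - R2 (L1 x) + L1 (L2 x) + L1 (R2 x),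
   fun x => R2 (R1 x) + R2 (L1 x) - L1 (R2 x)).

End AltDefs.

From HB Require Import structures.
From mathcomp Require Import all_boot all_order all_algebra.
Import GRing.Theory.
Local Open Scope ring_scope.

(* The four defining identities of E(X), evaluated at (x*-, -*x), are exactly
   the linearizations of the two alternative laws, so every Inn x lies in E(X)
   and Inn is multiplicative.  Conversely, putting the unit e into the first
   two identities gives f*e = e*f =: a and 2 (f*x) = 2 (a x), 2 (x*f) = 2 (x a);
   since 2 is invertible, (f*-, -*f) = Inn a. *)

Lemma addr_solve (V : zmodType) (p q r s : V) : r + s = p + q -> s = p + q - r.
Proof. by move=> <-; rewrite addrC addKr. Qed.

Section Alternative.
Variables (F : fieldType) (X : lmodType F) (mul : X -> X -> X).
Hypotheses (hbil : bilinear_mul mul) (halt : alternative mul).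

Lemma mulDl u v y : mul (u + v) y = mul u y + mul v y.
Proof. by have := hbil.1 y 1 u v; rewrite !scale1r. Qed.

Lemma mulDr y u v : mul y (u + v) = mul y u + mul y v.
Proof. by have := hbil.2 y 1 u v; rewrite !scale1r. Qed.

Let assoc a b c := mul (mul a b) c - mul a (mul b c).

Let assocDl u v b c : assoc (u + v) b c = assoc u b c + assoc v b c.
Proof. by rewrite /assoc !mulDl opprD addrACA. Qed.

Let assocDm a u v c : assoc a (u + v) c = assoc a u c + assoc a v c.
Proof. by rewrite /assoc mulDr mulDl mulDl mulDr opprD addrACA. Qed.

Let assocDr a b u v : assoc a b (u + v) = assoc a b u + assoc a b v.
Proof. by rewrite /assoc !mulDr opprD addrACA. Qed.

Let assoc_xxy x y : assoc x x y = 0.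
Proof. by rewrite /assoc (halt x y).2 subrr. Qed.

Let assoc_yxx x y : assoc y x x = 0.
Proof. by rewrite /assoc (halt x y).1 subrr. Qed.

Lemma alternative_left_linear a b c :
  mul (mul a b) c + mul (mul b a) c = mul a (mul b c) + mul b (mul a c).
Proof.
apply/eqP; rewrite -subr_eq0 opprD addrACA.
by have := assoc_xxy (a + b) c; rewrite assocDl !assocDm !assoc_xxy add0r addr0 => ->.
Qed.

Lemma alternative_right_linear a b c :
  mul (mul a b) c + mul (mul a c) b = mul a (mul b c) + mul a (mul c b).
Proof.
apply/eqP; rewrite -subr_eq0 opprD addrACA.
by have := assoc_yxx (b + c) a; rewrite assocDm !assocDr !assoc_yxx add0r addr0 => ->.
Qed.

Lemma Inn_in_E x : in_E mul (Inn mul x).1 (Inn mul x).2.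
Proof.
split; first by move=> a u v; rewrite /= hbil.2.
split; first by move=> a u v; rewrite /= hbil.1.
move=> a b /=; split; apply: addr_solve.
- by rewrite alternative_left_linear.
- by rewrite addrC alternative_right_linear addrC.
- by rewrite alternative_left_linear.
- exact: alternative_right_linear.
Qed.

Lemma Inn_is_linear (c : F) x y z :
  (Inn mul (c *: x + y)).1 z = c *: (Inn mul x).1 z + (Inn mul y).1 z /\
  (Inn mul (c *: x + y)).2 z = c *: (Inn mul x).2 z + (Inn mul y).2 z.
Proof. by rewrite /= hbil.1 hbil.2. Qed.

Lemma Emul_Inn x y z :
  (Emul (Inn mul x) (Inn mul y)).1 z = (Inn mul (mul x y)).1 z /\
  (Emul (Inn mul x) (Inn mul y)).2 z = (Inn mul (mul x y)).2 z.
Proof.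
split=> /=; apply: esym.
  rewrite -addrA addrC; apply: addr_solve.
  by rewrite addrC alternative_right_linear addrC.
by apply: addr_solve; rewrite addrC alternative_left_linear.
Qed.

End Alternative.

Section Unital.
Variables (F : fieldType) (X : lmodType F) (mul : X -> X -> X) (e : X).
Hypothesis hunit : is_unit_elt mul e.

Lemma Inn_eq0 x : (forall y, mul x y = 0 /\ mul y x = 0) -> x = 0.
Proof. by move=> Hx; rewrite -(hunit x).2 (Hx e).1. Qed.

Hypothesis hchar : (2%:R : F) != 0.

Lemma double_inj (v w : X) : v + v = w + w -> v = w.
Proof. by move=> E; apply: (scalerI hchar); rewrite !scaler_nat !mulr2n. Qed.

Lemma in_E_inner L R : in_E mul L R ->
  L e = R e /\ (forall x, L x = mul (L e) x /\ R x = mul x (L e)).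
Proof.
move=> [_ [_ H]].
have LeRe : L e = R e.
  have [+ _ _ _] := H e e.
  by rewrite (hunit e).1 (hunit (R e)).2 (hunit (L e)).2 (hunit (L e)).1 addrK.
split=> // x; split; apply: double_inj.
  have [+ _ _ _] := H e x.
  by rewrite !(hunit x).1 (hunit (L x)).1 -LeRe => {1}->; rewrite subrK.
have [_ + _ _] := H x e.
by rewrite !(hunit x).2 (hunit (R x)).2 -LeRe => {1}->; rewrite subrK.
Qed.

End Unital.

Theorem mainTheorem4 (F : fieldType) (X : lmodType F) (mul : X -> X -> X) (e : X)
  (hchar : (2%:R : F) != 0)
  (hbil : bilinear_mul mul) (halt : alternative mul) (hunit : is_unit_elt mul e) :
  (forall x : X, in_E mul (Inn mul x).1 (Inn mul x).2) /\
  (forall L R : X -> X, in_E mul L R ->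
     L e = R e /\ (forall x, L x = mul (L e) x /\ R x = mul x (L e))) /\
  (forall x : X, (forall y, mul x y = 0 /\ mul y x = 0) -> x = 0) /\
  (forall (a : F) (x y z : X),
     (Inn mul (a *: x + y)).1 z = a *: (Inn mul x).1 z + (Inn mul y).1 z /\
     (Inn mul (a *: x + y)).2 z = a *: (Inn mul x).2 z + (Inn mul y).2 z) /\
  (forall x y z : X,
     (Emul (Inn mul x) (Inn mul y)).1 z = (Inn mul (mul x y)).1 z /\
     (Emul (Inn mul x) (Inn mul y)).2 z = (Inn mul (mul x y)).2 z).
Proof.
split; first exact: Inn_in_E.
split; first exact: in_E_inner.
split; first exact: Inn_eq0.
split; first exact: Inn_is_linear.
exact: Emul_Inn.
Qed.
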